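(* Let $\Gamma$ be a single-player extensive-form game with no chance nodes. For every leaf $z\in\mathcal Z$ there exists a behavioral strategy $\pi_z$ that reaches $z$ with probability $\alpha(z)$, and hence $U_1(\pi_z)\ge\alpha(z)u_1(z)$.
   Context: A single-player extensive-form game without chance nodes consists of a finite rooted tree (nodes $\mathcal H$, leaves $\mathcal Z$, actions $A_h$), all nonterminal nodes belonging to Player 1, a utility $u_1:\mathcal Z\to\mathbb R_{\ge0}$, and a partition $\mathcal I_1$ of the nonterminal nodes into infosets with common action sets $A_I$. A behavioral strategy $\pi$ assigns $\pi(\cdot\mid I)\in\Delta(A_I)$ to each $I$; the reach probability of $z$ is the product of $\pi(a_k\mid I_k)$ along its path; $U_1(\pi)=\sum_z\mathbb P(z\mid\pi)u_1(z)$. For $z\in\mathcal Z$ with root-to-$z$ path $(h_0,\dots,h_{d-1})$, let $I_k$ be the infoset of $h_k$ and $a_k$ the action taken at $h_k$. For $I\in\mathcal I_1$ and $a\in A_I$ let $n_z(I)=|\{k:I_k=I\}|$, $n_z(a)=|\{k:I_k=I,a_k=a\}|$, $p_z(a)=n_z(a)/n_z(I)$, and define the absentmindedness coefficient $\alpha(z)=\prod_{I\in\mathcal I_1:n_z(I)>1}\prod_{a\in A_I:n_z(a)>0}p_z(a)^{n_z(a)}\in(0,1]$. *)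

From mathcomp Require Import all_boot all_order all_algebra.
Set Implicit Arguments. Unset Strict Implicit. Unset Printing Implicit Defensive.
Import Order.TTheory GRing.Theory Num.Theory.
Local Open Scope ring_scope.

(* A single-player extensive-form game without chance nodes.
   - I : finite type of infoset labels (the infoset of a nonterminal node is
     its label, so the labels induce the partition of nonterminal nodes);
   - A i : the common (finite) action set of infoset i;
   - a nonterminal node labelled i has exactly one child per action of A i;
   - a leaf carries its utility u_1(z). *)
Section Game.
Variables (R : realFieldType) (I : finType) (A : I -> finType).

Inductive gtree : Type :=
| Leaf of R
| Node (i : I) of (A i -> gtree).

Definition step := {i : I & A i}.

Fixpoint leaves (t : gtree) : seq (seq step * R) :=
  match t with
  | Leaf u => [:: ([::], u)]
  | Node i f =>
      flatten [seq [seq (Tagged A a :: z.1, z.2) | z <- leaves (f a)]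
              | a <- enum (A i)]
  end.

Definition behavioral (pi : forall i : I, A i -> R) : Prop :=
  (forall i a, 0 <= pi i a) /\ (forall i, \sum_(a : A i) pi i a = 1).

Definition reach (pi : forall i : I, A i -> R) (z : seq step) : R :=
  \prod_(x <- z) pi (tag x) (tagged x).

Definition U1 (t : gtree) (pi : forall i : I, A i -> R) : R :=
  \sum_(z <- leaves t) reach pi z.1 * z.2.

Definition n_info (z : seq step) (i : I) : nat := count (fun x => tag x == i) z.
Definition n_act (z : seq step) (i : I) (a : A i) : nat :=
  count (pred1 (Tagged A a)) z.

Definition alpha (z : seq step) : R :=
  \prod_(i : I | (1 < n_info z i)%N)
    \prod_(a : A i | (0 < n_act z a)%N)
       ((n_act z a)%:R / (n_info z i)%:R) ^+ n_act z a.

End Game.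

(* Play every infoset the player visits on the way to z with the empirical
   frequencies p_z(a) = n_z(a)/n_z(I) of the path, and uniformly elsewhere.
   The reach probability of z is then the product of the p_z(a)^(n_z(a)),
   which is alpha(z) because infosets visited only once contribute the factor
   1/1.  Since all utilities are nonnegative, U_1 is at least the term of z. *)
From mathcomp Require Import all_boot all_order all_algebra.
Set Implicit Arguments. Unset Strict Implicit. Unset Printing Implicit Defensive.
Import Order.TTheory GRing.Theory Num.Theory.
Local Open Scope ring_scope.

Lemma count_sum_count_mem (T : finType) (P : pred T) (s : seq T) :
  count P s = (\sum_(x | P x) count_mem x s)%N.
Proof.
elim: s => [|y s IH] /=; first by rewrite big1.
rewrite IH big_split /=; congr (_ + _)%N.
have [Py|nPy] := boolP (P y).
  rewrite (bigD1 y) //= eqxx big1 // => x /andP[_ nyx].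
  by rewrite eq_sym (negbTE nyx).
by rewrite big1 // => x Px; apply/eqP; rewrite eqb0; apply: contra nPy => /eqP->.
Qed.

Lemma prodr_count_mem (R : comPzSemiRingType) (T : finType) (s : seq T)
    (F : T -> R) :
  \prod_(x <- s) F x = \prod_x F x ^+ count_mem x s.
Proof.
rewrite -prodr_undup_exp_count big_uniq ?undup_uniq // big_mkcond.
apply: eq_bigr => x _; rewrite mem_undup.
by case: ifPn => // /count_memPn->.
Qed.

Section AbsentMinded.
Variables (R : realFieldType) (I : finType) (A : I -> finType).
Implicit Types (z : seq (step A)) (pi : forall i : I, A i -> R).

Lemma n_info_sum z i : n_info z i = (\sum_(a : A i) n_act z a)%N.
Proof.
rewrite /n_info count_sum_count_mem.
transitivity (\sum_(j | j == i) \sum_(a : A j) n_act z a)%N; last first.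
  by rewrite big_pred1_eq.
by rewrite sig_big_dep; apply: eq_big => -[j a] //=; rewrite andbT.
Qed.

Lemma n_act_le_info z i (a : A i) : (n_act z a <= n_info z i)%N.
Proof. by rewrite n_info_sum (bigD1 a) ?leq_addr. Qed.

Lemma reach_count pi z :
  reach pi z = \prod_(i : I) \prod_(a : A i) pi i a ^+ n_act z a.
Proof.
rewrite /reach prodr_count_mem sig_big_dep.
by apply: eq_big => -[j a].
Qed.

Lemma reach_ge0 pi z : behavioral pi -> 0 <= reach pi z.
Proof. by move=> [pi_ge0 _]; apply: prodr_ge0 => x _; apply: pi_ge0. Qed.

Lemma reach_le_U1 (t : gtree R A) pi (y : seq (step A) * R) :
  behavioral pi -> (forall x, x \in leaves t -> 0 <= x.2) ->
  y \in leaves t -> reach pi y.1 * y.2 <= U1 t pi.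
Proof.
move=> pi_beh u_ge0 yt; rewrite /U1 (big_rem _ yt) /= lerDl big_seq.
apply: sumr_ge0 => x /mem_rem xt.
by rewrite mulr_ge0 ?reach_ge0 ?u_ge0.
Qed.

Definition freq_strategy z (i : I) (a : A i) : R :=
  if (0 < n_info z i)%N then (n_act z a)%:R / (n_info z i)%:R
  else (#|A i|%:R)^-1.

Lemma freq_strategy_behavioral z :
  (forall i, 0 < #|A i|)%N -> behavioral (freq_strategy z).
Proof.
move=> A_gt0; split=> [i a|i]; rewrite /freq_strategy.
  by case: ifP => _; rewrite ?divr_ge0 ?invr_ge0 ?ler0n.
have [_|info_gt0] := posnP (n_info z i).
  by rewrite sumr_const -[LHS]mulr_natr mulVf // pnatr_eq0 -lt0n.
by rewrite -mulr_suml -natr_sum -n_info_sum divff // pnatr_eq0 -lt0n.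
Qed.

Lemma prod_freq_strategy z i :
  \prod_(a : A i) freq_strategy z a ^+ n_act z a =
  \prod_(a : A i | (0 < n_act z a)%N)
     ((n_act z a)%:R / (n_info z i)%:R) ^+ n_act z a.
Proof.
rewrite [RHS]big_mkcond; apply: eq_bigr => a _ /=.
have [->|act_gt0] := posnP (n_act z a); first by rewrite expr0.
by rewrite /freq_strategy (leq_trans act_gt0 (n_act_le_info z a)).
Qed.

Lemma reach_freq_strategy z : reach (freq_strategy z) z = alpha R z.
Proof.
rewrite reach_count /alpha [RHS]big_mkcond; apply: eq_bigr => i _ /=.
rewrite prod_freq_strategy; case: ltnP => // info_le1.
apply: big1 => a act_gt0.
have act1 : n_act z a = 1%N.
  by apply/eqP; rewrite eqn_leq act_gt0 (leq_trans (n_act_le_info z a)).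
have info1 : n_info z i = 1%N.
  by apply/eqP; rewrite eqn_leq info_le1 -act1 n_act_le_info.
by rewrite act1 info1 divr1.
Qed.

End AbsentMinded.

Theorem lemma2 (R : realFieldType) (I : finType) (A : I -> finType)
  (t : gtree R A)
  (hA : forall i : I, (0 < #|A i|)%N)
  (hu : forall z, z \in leaves t -> 0 <= z.2)
  (z : seq (step A) * R) (hz : z \in leaves t) :
  exists pi : forall i : I, A i -> R,
    behavioral pi /\ reach pi z.1 = alpha R z.1 /\ alpha R z.1 * z.2 <= U1 t pi.
Proof.
have pi_beh := freq_strategy_behavioral R z.1 hA.
exists (freq_strategy R z.1); split=> //.
split; first exact: reach_freq_strategy.
by rewrite -reach_freq_strategy; apply: reach_le_U1.
Qed.
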